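(* Every instance of $P_n\,|\,\mathrm{conc}, p_j=1\,|\,*$ in which the objective $*$ is a regular scheduling criterion has an optimal schedule $C$ with $C_{\max}=\max_j C_j\le tw\cdot\log n+1$, where $tw$ is the treewidth of the conflict graph and $n$ the number of jobs.
   Context: In $P_n\,|\,\mathrm{conc}, p_j=1\,|\,*$, jobs $\{1,\dots,n\}$ (possibly with due dates and weights) all have processing time $1$ and release time $0$; there is a conflict graph $G$ on the jobs, and a schedule $C:\{1,\dots,n\}\to\mathbb{N}_{\ge1}$ is feasible iff $C(i)\ne C(j)$ for every edge $\{i,j\}$ of $G$. An optimal schedule is a feasible schedule minimizing the objective. A scheduling criterion is regular if it is non-decreasing in the completion times of the jobs (decreasing a job's completion time never increases the objective value). $\log$ is base $2$. *)

From HB Require Import structures.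
From mathcomp Require Import all_boot all_order all_algebra.
From mathcomp Require Import reals exp.
Set Implicit Arguments. Unset Strict Implicit. Unset Printing Implicit Defensive.
Import Order.TTheory GRing.Theory Num.Theory.

Definition simple_graph (V : finType) (e : rel V) : Prop :=
  symmetric e /\ irreflexive e.

Definition is_tree (T : finType) (e : rel T) : Prop :=
  [/\ 0 < #|T|, simple_graph e,
      (forall x y : T, connect e x y) &
      (forall s : seq T, 3 <= size s -> uniq s -> ~~ cycle e s)].

Definition tree_decomposition (V : finType) (G : rel V)
  (T : finType) (eT : rel T) (B : T -> {set V}) : Prop :=
  [/\ is_tree eT,
      (forall v : V, exists t : T, v \in B t),
      (forall u v : V, G u v -> exists t : T, (u \in B t) && (v \in B t)) &
      (forall (v : V) (t1 t2 : T), v \in B t1 -> v \in B t2 ->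
         connect [rel a b | [&& eT a b, v \in B a & v \in B b]] t1 t2)].

Definition td_width (V T : finType) (B : T -> {set V}) : nat :=
  (\max_(t : T) #|B t|).-1.

Definition is_treewidth (V : finType) (G : rel V) (k : nat) : Prop :=
  (exists (T : finType) (eT : rel T) (B : T -> {set V}),
      tree_decomposition G eT B /\ td_width B = k) /\
  (forall (T : finType) (eT : rel T) (B : T -> {set V}),
      tree_decomposition G eT B -> k <= td_width B).

(* a schedule assigns to each job j its completion time C j >= 1 *)
Definition schedule (n : nat) := 'I_n -> nat.

Definition feasible (n : nat) (G : rel 'I_n) (C : schedule n) : Prop :=
  (forall j, 0 < C j) /\ (forall i j, G i j -> C i != C j).

Definition regular (R : realType) (n : nat) (f : schedule n -> R) : Prop :=
  forall C C' : schedule n, (forall j, 0 < C j) -> (forall j, 0 < C' j) ->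
    (forall j, C j <= C' j)%N -> (f C <= f C')%R.

Definition optimal (R : realType) (n : nat) (G : rel 'I_n)
  (f : schedule n -> R) (C : schedule n) : Prop :=
  feasible G C /\ forall C', feasible G C' -> (f C <= f C')%R.

Definition Cmax (n : nat) (C : schedule n) : nat := \max_(j : 'I_n) C j.

Definition log2 (R : realType) (x : R) : R := (ln x / ln 2)%R.

From HB Require Import structures.
From mathcomp Require Import all_boot all_order all_algebra.
From mathcomp Require Import reals exp.
From mathcomp Require Import zify boolp.
Set Implicit Arguments. Unset Strict Implicit. Unset Printing Implicit Defensive.
Import Order.TTheory GRing.Theory Num.Theory.

(* A graph of treewidth [k] is [k]-degenerate: every nonempty vertex set [S]
   contains a vertex with at most [k] neighbours in [S] (peel leaves off a tree
   decomposition).  For a regular criterion, some optimal schedule is a Grundy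
   colouring of the conflict graph: moving a job down to a free earlier slot
   keeps the schedule feasible and does not increase the objective.  In a Grundy
   colouring, let [a_s] be the number of jobs completing at time [s] or later.
   A job completing at time [t >= s] has neighbours completing at each of the
   times [s, ..., t - 1], so the subgraph induced by these [a_s] jobs, which has
   at most [k (a_s - 1)] edges, forces [k a_s >= k + sum_(r > s) a_r].  Hence
   [n >= a_1 >= (1 + 1/k)^(c-1)] for the largest completion time [c], and
   [(1 + 1/k)^k >= 2] gives [c <= k log n + 1]. *)

(** * Degeneracy of graphs of bounded treewidth *)

Section InducedConnectivity.
Variables (T : finType) (e : rel T).

Definition connected_in (U : {set T}) : Prop :=
  forall u w, u \in U -> w \in U -> connect [rel x y in U | e x y] u w.

Lemma connected_inD1 (U : {set T}) (l p : T) : symmetric e ->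
  (forall x, x \in U -> e l x -> x = p) -> connected_in U -> connected_in (U :\ l).
Proof.
move=> e_sym leaf conU u w; rewrite !inE => /andP[ul uU] /andP[wl wU].
have /connectP[s0 path_s0 w_last] := conU u w uU wU.
rewrite {}w_last in wl *; case/shortenP: path_s0 wl => s path_s uniq_s _ wl.
have l_notin : l \notin u :: s.
  rewrite inE eq_sym (negbTE ul) /=; apply/negP => ls.
  move: path_s uniq_s wl; case/splitPr: ls => s1 s2.
  case: s2 => [|y s2]; first by rewrite last_cat /= eqxx.
  rewrite cat_path => /andP[_ path_lys] uniq_s _.
  move: path_lys => /= /and3P[/andP[/andP[x_in _] e_xl] /andP[/andP[_ y_in] e_ly] _].
  move: uniq_s; rewrite -cat_cons cat_uniq => /and3P[_ /hasPn/(_ y) y_notin _].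
  have y_p : y = p by apply: leaf.
  have x_p : last u s1 = p by apply: leaf; rewrite // e_sym.
  by move: y_notin; rewrite y_p -x_p mem_last !inE eqxx orbT => /(_ isT).
apply/connectP; exists s => //.
apply: (sub_in_path (P := predC1 l)) path_s; last first.
  by apply/allP => x xs; apply: contraNneq l_notin => <-.
move=> x y /= xl yl /andP[/andP[xU yU] exy].
by rewrite !inE /= in xl yl; rewrite !inE xl yl xU yU.
Qed.

Hypotheses (e_sym : symmetric e) (e_irr : irreflexive e).
Hypothesis e_acyclic : forall s : seq T, 3 <= size s -> uniq s -> ~~ cycle e s.

Lemma acyclic_path_cons (U : {set T}) x z s w :
  let R := [rel x y in U | e x y] in
  path R x (z :: s) -> uniq (x :: z :: s) -> w \in U -> e x w -> w != z ->
  path R w (x :: z :: s) && uniq (w :: x :: z :: s).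
Proof.
move=> R /= /andP[/andP[/andP[xU zU] exz] path_s] uniq_xs wU exw wz.
have w_notin : w \notin x :: z :: s.
  rewrite !inE (negbTE wz) /= negb_or; apply/andP; split.
    by apply: contraTneq exw => ->; rewrite e_irr.
  apply/negP => w_in; move: uniq_xs path_s; case/splitPr: w_in => s1 s2 uniq_xs path_s.
  have uniq_cyc : uniq (x :: z :: rcons s1 w).
    have : uniq (x :: z :: s1 ++ w :: s2) := uniq_xs.
    by rewrite -[w :: s2]cat1s catA -2!cat_cons cat_uniq cats1 => /andP[].
  have size_cyc : 3 <= size (x :: z :: rcons s1 w) by rewrite /= size_rcons.
  apply: (negP (e_acyclic size_cyc uniq_cyc)).
  move: path_s; rewrite cat_path => /andP[path_s1] /= /andP[/andP[_ e_lw] _].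
  rewrite /= rcons_path last_rcons exz (e_sym w) exw rcons_path e_lw !andbT.
  by apply: sub_path path_s1 => a b /andP[].
by rewrite /= wU xU (e_sym w) exw zU exz path_s w_notin uniq_xs.
Qed.

(* Without a leaf, every simple path could be extended at its head, which
   would give simple paths of any length. *)
Lemma exists_leaf (U : {set T}) : connected_in U -> 1 < #|U| ->
  exists l p, [/\ l \in U, p \in U, e l p & forall x, x \in U -> e l x -> x = p].
Proof.
move=> conU U_gt1; apply: contrapT => no_leaf.
pose R := [rel x y in U | e x y].
have long m : exists x z s, [&& path R x (z :: s), uniq (x :: z :: s) & size s == m].
  elim: m => [|m [x [z [s /and3P[path_s uniq_s /eqP <-]]]]].
    have /card_gt1P[x [y [xU yU xy]]] := U_gt1.
    have /connectP[[|z s] /= path_s y_last] := conU x y xU yU.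
      by rewrite y_last eqxx in xy.
    move: path_s => /andP[Rxz _]; exists x, z, [::]; rewrite /= Rxz inE !andbT.
    by apply/eqP => xz; move: Rxz; rewrite xz /= e_irr andbF.
  case: (boolP [exists w, [&& w \in U, e x w & w != z]]); last first.
    move/existsPn => only_z; case: no_leaf; exists x, z.
    move: path_s => /andP[/andP[/andP[xU zU] exz] _]; split=> // w wU exw.
    by apply/eqP; move: (only_z w); rewrite wU exw /= negbK.
  case/existsP => w /and3P[wU exw wz].
  have /andP[path_w uniq_w] := acyclic_path_cons path_s uniq_s wU exw wz.
  by exists w, x, (z :: s); apply/and3P.
have [x [z [s /and3P[_ uniq_s /eqP size_s]]]] := long #|T|.
have := max_card (mem (x :: z :: s)).
by rewrite (card_uniqP uniq_s) /= size_s => /ltnW; rewrite ltnn.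
Qed.

End InducedConnectivity.

Definition degenerate (V : finType) (G : rel V) (k : nat) : Prop :=
  forall S : {set V}, S != set0 -> exists2 v, v \in S & #|[set u in S | G v u]| <= k.

Section TreeDecomposition.
Variables (V T : finType) (G : rel V) (eT : rel T) (B : T -> {set V}).

Definition bags_of (v : V) : {set T} := [set t | v \in B t].

(* The nodes [U] of the tree, with their bags restricted to [S], form a tree
   decomposition of the subgraph of [G] induced by [S]. *)
Definition decomposition_on (S : {set V}) (U : {set T}) : Prop :=
  [/\ connected_in eT U,
      forall v, v \in S -> exists2 t, t \in U & v \in B t,
      forall u v, u \in S -> v \in S -> G u v ->
        exists2 t, t \in U & (u \in B t) && (v \in B t) &
      forall v, v \in S -> connected_in eT (U :&: bags_of v)].

Lemma tree_decomposition_on S : tree_decomposition G eT B -> decomposition_on S setT.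
Proof.
case=> [[_ _ conT _] cover edge con]; split.
- move=> u w _ _; apply: connect_sub (conT u w) => x y exy.
  by apply: connect1; rewrite /= !inE exy.
- by move=> v _; have [t vt] := cover v; exists t; rewrite ?inE.
- by move=> u v _ _ /edge[t uvt]; exists t; rewrite ?inE.
- move=> v _ t1 t2; rewrite !inE => v1 v2.
  apply: connect_sub (con v t1 t2 v1 v2) => x y /and3P[exy vx vy].
  by apply: connect1; rewrite /= !inE vx vy exy.
Qed.

Lemma decomposition_onD1 (S : {set V}) (U : {set T}) l p :
  symmetric eT -> p \in U -> p != l ->
  (forall x, x \in U -> eT l x -> x = p) -> {in S, {subset B l <= B p}} ->
  decomposition_on S U -> decomposition_on S (U :\ l).
Proof.
move=> eTsym pU pl leaf lp [conU cover edge con]; split.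
- exact: connected_inD1 leaf conU.
- move=> v vS; have [t tU vt] := cover v vS.
  have [tl | tl] := eqVneq t l; last by exists t; rewrite // !inE tl.
  by exists p; rewrite ?inE ?pl // lp // -tl.
- move=> u v uS vS /(edge u v uS vS)[t tU /andP[ut vt]].
  have [tl | tl] := eqVneq t l; last by exists t; rewrite ?inE ?tl ?ut.
  by exists p; rewrite ?inE ?pl // !lp -?tl.
- move=> v vS; rewrite setIDAC.
  by apply: connected_inD1 (con v vS) => // x /setIP[xU _]; apply: leaf.
Qed.

Lemma card_bag_le t : #|B t| <= (td_width B).+1.
Proof. exact: leq_trans (leq_bigmax_cond (F := fun t => #|B t|) _ isT) (leqSpred _). Qed.

Lemma card_nbrs_in_bag (S : {set V}) v l : irreflexive G -> v \in B l ->
  {in S, forall u, G v u -> u \in B l} -> #|[set u in S | G v u]| <= td_width B.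
Proof.
move=> Girr vl nbrs_l.
have sub : [set u in S | G v u] \subset B l :\ v.
  apply/subsetP => u; rewrite !inE => /andP[uS Gvu].
  by rewrite nbrs_l // andbT; apply: contraTneq Gvu => ->; rewrite Girr.
rewrite -ltnS (leq_trans _ (card_bag_le l)) // (cardsD1 v (B l)) vl add1n ltnS.
exact: subset_leq_card.
Qed.

Lemma private_vertex_low_degree (S : {set V}) (U : {set T}) v l :
  irreflexive G -> decomposition_on S U -> v \in S ->
  (forall t, t \in U -> v \in B t -> t = l) -> #|[set u in S | G v u]| <= td_width B.
Proof.
move=> Girr [_ cover edge _] vS only_l.
have [t tU vt] := cover v vS.
have vl : v \in B l by rewrite -(only_l t tU vt).
apply: card_nbrs_in_bag Girr vl _ => u uS /(edge v u vS uS)[t' t'U /andP[vt' ut']].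
by rewrite -(only_l t' t'U vt').
Qed.

(* Peel a leaf [l] off [U]: either some vertex of [S] lies in [B l] only, and all
   its neighbours lie in [B l], or [B l] meets [S] inside the neighbouring bag
   and [l] can be dropped. *)
Lemma decomposition_on_degenerate (S : {set V}) (U : {set T}) :
  irreflexive G -> symmetric eT -> irreflexive eT ->
  (forall s : seq T, 3 <= size s -> uniq s -> ~~ cycle eT s) ->
  S != set0 -> U != set0 -> decomposition_on S U ->
  exists2 v, v \in S & #|[set u in S | G v u]| <= td_width B.
Proof.
move=> Girr eTsym eTirr acyc /set0Pn[v0 v0S].
have [m] := ubnP #|U|; elim: m U => // m IH U U_lt U0 decU.
have [U_le1 | U_gt1] := leqP #|U| 1.
  have /set0Pn[l lU] := U0.
  exists v0 => //; apply: (private_vertex_low_degree (l := l) Girr decU v0S) => t tU _.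
  exact: (card_le1_eqP U_le1).
have [conU _ _ con] := decU.
have [l [p [lU pU elp leaf]]] := exists_leaf eTsym eTirr acyc conU U_gt1.
case: (boolP [exists v in S, (v \in B l) && (v \notin B p)]).
  case/exists_inP => v vS /andP[vl vNp]; exists v => //.
  apply: (private_vertex_low_degree (l := l) Girr decU vS) => t tU vt.
  apply/eqP; apply: contraNT vNp => tl.
  have lW : l \in U :&: bags_of v by rewrite !inE lU.
  have tW : t \in U :&: bags_of v by rewrite !inE tU.
  have /connectP[[|x s] /= path_s t_last] := con v vS l t lW tW.
    by rewrite t_last eqxx in tl.
  move: path_s => /andP[/andP[/andP[_ /setIP[xU]]]].
  by rewrite inE => vx elx _; rewrite -(leaf x xU elx).
have pl : p != l by apply: contraTneq elp => ->; rewrite eTirr.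
move/exists_inPn => lp; apply: (IH (U :\ l)).
- by move: U_lt; rewrite (cardsD1 l U) lU add1n ltnS.
- by apply/set0Pn; exists p; rewrite !inE pU pl.
- apply: (decomposition_onD1 eTsym pU pl leaf _ decU) => v vS vl.
  by move: (lp v vS); rewrite vl negbK.
Qed.

Lemma tree_decomposition_degenerate :
  irreflexive G -> tree_decomposition G eT B -> degenerate G (td_width B).
Proof.
move=> Girr TD S S0; have [[T_gt0 [eTsym eTirr] _ acyc] _ _ _] := TD.
apply: decomposition_on_degenerate Girr eTsym eTirr acyc S0 _ (tree_decomposition_on S TD).
by rewrite -card_gt0 cardsT.
Qed.

End TreeDecomposition.

(** * Grundy colourings of degenerate graphs *)

Section Grundy.
Variables (V : finType) (G : rel V).

Definition grundy (C : V -> nat) : Prop :=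
  forall v x, 0 < x < C v -> exists2 u, G v u & C u = x.

Lemma grundy_card_nbrs C v s : grundy C -> 0 < s ->
  C v - s <= #|[set u | G v u & s <= C u < C v]|.
Proof.
move=> grC s_gt0; rewrite cardE -(size_iota s (C v - s)) -(size_map C).
apply: uniq_leq_size (iota_uniq _ _) _ => x; rewrite mem_iota => /andP[sx x_lt].
have [u Gvu Cu] : exists2 u, G v u & C u = x by apply: grC; lia.
by rewrite -Cu; apply: map_f; rewrite mem_enum inE Gvu Cu sx /=; lia.
Qed.

Lemma grundy_le_card C v : irreflexive G -> grundy C -> C v <= #|V|.
Proof.
move=> Girr grC; have := grundy_card_nbrs v grC (ltn0Sn 0).
have : #|[set u | G v u & 1 <= C u < C v]| <= #|[set~ v]|.
  apply/subset_leq_card/subsetP => u; rewrite !inE.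
  by apply: contraTneq => ->; rewrite Girr.
have : 0 < #|V| by apply/card_gt0P; exists v.
rewrite cardsC1; lia.
Qed.

End Grundy.

Lemma sum_nat_of_bool (T : finType) (A : {set T}) (b : pred T) :
  \sum_(v in A) (b v : nat) = #|[set v in A | b v]|.
Proof.
rewrite -sum1_card big_mkcond [RHS]big_mkcond /=; apply: eq_bigr => v _.
by rewrite !inE; case: (v \in A); case: (b v).
Qed.

Section DegenerateOrientation.
Variables (V : finType) (G : rel V) (k : nat) (c : V -> nat).
Hypotheses (Gsym : symmetric G) (Girr : irreflexive G) (Gdeg : degenerate G k).

(* The sum counts each edge of [G] inside [S] at most once, at its endpoint of
   larger [c]; removing a vertex of degree at most [k] in [S] gives the bound. *)
Lemma sum_lower_nbrs_le (S : {set V}) :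
  \sum_(v in S) #|[set u in S | G v u & c u < c v]| <= k * #|S|.-1.
Proof.
have [m] := ubnP #|S|; elim: m S => // m IH S S_lt.
have [-> | S0] := eqVneq S set0; first by rewrite big_set0.
have [v0 v0S deg_v0] := Gdeg S0.
set S' := S :\ v0; set N := [set u in S | G v0 u].
have S_card : #|S| = #|S'|.+1 by rewrite (cardsD1 v0 S) v0S.
have N_sub : N \subset S'.
  apply/subsetP => u; rewrite !inE => /andP[uS Gv0u]; rewrite uS andbT.
  by apply: contraTneq Gv0u => ->; rewrite Girr.
have low_v0 : #|[set u in S | G v0 u & c u < c v0]| = #|[set u in N | c u < c v0]|.
  by apply: eq_card => u; rewrite !inE andbA.
have low_S' v : v \in S' -> #|[set u in S | G v u & c u < c v]| =
    #|[set u in S' | G v u & c u < c v]| + (G v v0 && (c v0 < c v)).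
  move=> vS'; rewrite (cardsD1 v0) !inE v0S /= addnC; congr (_ + _).
  by apply: eq_card => u; rewrite !inE andbA.
have up_v0 : #|[set v in S' | G v v0 && (c v0 < c v)]| <= #|[set u in N | c v0 <= c u]|.
  apply/subset_leq_card/subsetP => u; rewrite !inE => /andP[/andP[uv0 uS] /andP[Guv0 lt]].
  by rewrite uS Gsym Guv0 ltnW.
have N_split : #|[set u in N | c u < c v0]| + #|[set u in N | c v0 <= c u]| = #|N|.
  rewrite -(cardsID [set u | c u < c v0] N).
  by congr (_ + _); apply: eq_card => u; rewrite !inE -?leqNgt andbC.
rewrite (big_setD1 v0 v0S) /= low_v0 -/S' (eq_bigr _ low_S') big_split /=.
rewrite sum_nat_of_bool S_card /=.
have IH' := IH S' ltac:(lia).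
have N_le : #|N| <= minn k #|S'| by rewrite leq_min deg_v0 subset_leq_card.
case: #|S'| IH' N_le => [|s'] IH' N_le; rewrite ?muln0 ?mulnS in IH' *; lia.
Qed.

End DegenerateOrientation.

Section GeometricGrowth.
Variables (k t : nat) (a D : nat -> nat).
Hypothesis D_step : forall s, D s = D s.+1 + a s.+1.
Hypothesis D_bound : forall s, 0 < s <= t -> D s + k <= k * a s.

(* [T s := D s + k] grows geometrically as [s] decreases:
   [k * T s.-1 = k * T s + k * a s >= k.+1 * T s]. *)
Lemma growth_tail j : j < t -> k * k.+1 ^ j <= k ^ j * (D (t - j) + k).
Proof.
elim: j => [|j IH] j_lt; first by rewrite subn0 !expn0 muln1 mul1n leq_addl.
have tj : t - j = (t - j.+1).+1 by lia.
have := @D_bound (t - j.+1).+1 ltac:(lia).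
have := IH (ltnW j_lt); rewrite tj (D_step (t - j.+1)) !expnS.
set d := D _; set x := a _; set p := k ^ j; set q := k.+1 ^ j => IH' bound.
nia.
Qed.

Lemma geometric_growth : 0 < t -> 0 < a t -> k.+1 ^ t.-1 <= k ^ t.-1 * a 1.
Proof.
move=> t_gt0 at_gt0; have [k0 | k_gt0] := posnP k.
  (* for [k = 0] the bound forces [D s = 0] on [1 <= s <= t], hence [t = 1] *)
  suff t1 : t = 1 by move: at_gt0; rewrite t1 !expn0 mul1n.
  apply/eqP; rewrite eqn_leq t_gt0 andbT leqNgt; apply/negP => t_gt1.
  have := @D_bound t.-1 ltac:(lia); rewrite k0 D_step prednK //; lia.
have := growth_tail (j := t.-1) ltac:(lia); rewrite -subn1 subKn // subn1.
have := @D_bound 1 ltac:(lia); set p := k ^ _ => bound growth.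
rewrite -(leq_pmul2l k_gt0); nia.
Qed.

End GeometricGrowth.

Lemma expn_mulS_le k j : k ^ j * (k + j) <= k * k.+1 ^ j.
Proof.
elim: j => [|j IH]; first by rewrite !expn0 mul1n muln1 addn0.
rewrite !expnS; set p := k ^ j in IH *; set q := k.+1 ^ j in IH *; nia.
Qed.

(* Uses [(1 + 1/k)^k >= 2]. *)
Lemma exp2_le_of_growth k m N : k.+1 ^ m <= k ^ m * N -> 2 ^ m <= N ^ k.
Proof.
have [-> | k_gt0] := posnP k.
  by case: m => [|m]; rewrite ?expn0 // exp1n exp0n // mul0n.
have [-> | m_gt0] := posnP m; first by rewrite !expn0 mul1n expn_gt0 => ->.
move=> growth; have kk : 2 * k ^ k <= k.+1 ^ k.
  have := expn_mulS_le k k; rewrite -(leq_pmul2l k_gt0); set p := k ^ k; nia.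
have step1 : (2 * k ^ k) ^ m <= (k.+1 ^ m) ^ k by rewrite expnAC leq_exp2r.
have step2 : (k.+1 ^ m) ^ k <= (k ^ m * N) ^ k by rewrite leq_exp2r.
have := leq_trans step1 step2; rewrite !expnMn -expnAC [X in _ <= X]mulnC.
by rewrite leq_pmul2r // !expn_gt0 k_gt0.
Qed.

Section GrundyColorBound.
Variables (V : finType) (G : rel V) (k : nat) (C : V -> nat).
Hypotheses (Gsym : symmetric G) (Girr : irreflexive G).
Hypotheses (Gdeg : degenerate G k) (grC : grundy G C).

Let a s := #|[set u | s <= C u]|.
(* truncated subtraction: only the [u] with [s <= C u] contribute *)
Let D s := \sum_u (C u - s).

Let D_step s : D s = D s.+1 + a s.+1.
Proof.
rewrite /D /a -sum1_card [X in _ + X]big_mkcond -big_split /=; apply: eq_bigr => u _.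
by rewrite inE; case: leqP; lia.
Qed.

Let D_bound s : 0 < s -> 0 < a s -> D s + k <= k * a s.
Proof.
move=> s_gt0; rewrite /a; set S := [set u | s <= C u] => S_gt0.
have -> : D s = \sum_(v in S) (C v - s).
  by rewrite /D [RHS]big_mkcond; apply: eq_bigr => v _; rewrite inE; case: leqP; lia.
have : \sum_(v in S) (C v - s) <= k * #|S|.-1.
  apply: leq_trans (sum_lower_nbrs_le C Gsym Girr Gdeg S).
  apply: leq_sum => v _; apply: leq_trans (grundy_card_nbrs v grC s_gt0) _.
  by apply/subset_leq_card/subsetP => u; rewrite !inE => /andP[-> /andP[-> ->]].
by move: S_gt0; case: #|S| => // m _; rewrite mulnS /=; lia.
Qed.

Lemma grundy_color_bound v : 2 ^ (C v).-1 <= #|V| ^ k.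
Proof.
have V_gt0 : 0 < #|V| by apply/card_gt0P; exists v.
have [-> | Cv_gt0] := posnP (C v); first by rewrite expn0 expn_gt0 V_gt0.
have a_gt0 s : s <= C v -> 0 < a s by move=> sv; apply/card_gt0P; exists v; rewrite inE.
have bound s : 0 < s <= C v -> D s + k <= k * a s.
  by case/andP=> s_gt0 sv; apply: D_bound s_gt0 (a_gt0 s sv).
apply: exp2_le_of_growth.
apply: leq_trans (geometric_growth D_step bound Cv_gt0 (a_gt0 _ (leqnn _))) _.
by rewrite leq_mul2l max_card orbT.
Qed.

End GrundyColorBound.

(** * Optimal schedules *)

Section OptimalSchedules.
Variables (n : nat) (G : rel 'I_n).
Hypotheses (Gsym : symmetric G) (Girr : irreflexive G).

Lemma feasible_recolor (C : schedule n) j x : feasible G C -> 0 < x ->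
  (forall i, G j i -> C i != x) -> feasible G (fun i => if i == j then x else C i).
Proof.
move=> [C_gt0 C_proper] x_gt0 x_free; split=> [i | i i' Gii'] /=.
  by case: (i == j).
case: (eqVneq i j) Gii' => [-> | ij]; case: (eqVneq i' j) => [-> | i'j] Gii'.
- by rewrite Girr in Gii'.
- by rewrite eq_sym x_free.
- by rewrite x_free // Gsym.
- exact: C_proper.
Qed.

Lemma grundy_below (C : schedule n) : feasible G C ->
  exists C' : schedule n, [/\ feasible G C', grundy G C' & forall j, C' j <= C j].
Proof.
have [m] := ubnP (\sum_j C j); elim: m C => // m IH C sum_lt feasC.
have [grC | not_grC] := pselect (grundy G C); first by exists C; split=> // j.
have [j [x [x_range x_free]]] : exists j x, 0 < x < C j /\ forall i, G j i -> C i != x.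
  move/existsNP: not_grC => [j /existsNP[x /not_implyP[x_range x_missing]]].
  by exists j, x; split=> // i Gji; apply: contra_notN x_missing => /eqP Cix; exists i.
pose C2 i := if i == j then x else C i.
have le_C2 i : C2 i <= C i by rewrite /C2; case: eqP => [-> | _]; lia.
have sum_C2 : \sum_i C2 i < \sum_i C i.
  rewrite (bigD1 j) // [X in _ < X](bigD1 j) //= {1}/C2 eqxx.
  rewrite (eq_bigr C) => [|i /negbTE ij]; by rewrite /C2 ?ij // ltn_add2r; case/andP: x_range.
have feasC2 : feasible G C2.
  by apply: feasible_recolor feasC _ x_free; case/andP: x_range.
have [C' [feasC' grC' le_C']] := IH C2 ltac:(lia) feasC2.
by exists C'; split=> // i; apply: leq_trans (le_C' i) (le_C2 i).
Qed.

Definition sched_of (g : {ffun 'I_n -> 'I_n.+1}) : schedule n := fun j => g j.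

Lemma feasible_bounded_below (C : schedule n) : feasible G C ->
  exists g, feasible G (sched_of g) /\ forall j, sched_of g j <= C j.
Proof.
case/grundy_below => C' [feasC' grC' le_C'].
have C'_lt j : C' j < n.+1 by rewrite ltnS -[n]card_ord (grundy_le_card _ Girr grC').
exists [ffun j => Ordinal (C'_lt j)].
suff -> : sched_of [ffun j => Ordinal (C'_lt j)] = C' by [].
by apply/funext => j; rewrite /sched_of ffunE.
Qed.

Variables (R : realType) (f : schedule n -> R).
Hypothesis f_reg : regular f.

(* By regularity it suffices to minimise [f] over the finitely many feasible
   schedules bounded by [n], and these exist. *)
Lemma exists_optimal : exists C, optimal G f C.
Proof.
have feas_succ : feasible G (fun j : 'I_n => j.+1).
  split=> // i j Gij; rewrite eqSS; apply: contraTneq Gij => /val_inj ->.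
  exact/negbT/Girr.
pose P g := `[< feasible G (sched_of g) >].
have [g0 [feas_g0 _]] := feasible_bounded_below feas_succ.
have Pg0 : P g0 by apply/asboolP.
have [gm /asboolP feas_gm gm_min] := extremumP (f \o sched_of) le_refl le_trans le_total Pg0.
exists (sched_of gm); split=> // C feasC.
have [g [feas_g le_g]] := feasible_bounded_below feasC.
apply: le_trans (gm_min g _) (f_reg (proj1 feas_g) (proj1 feasC) le_g).
exact/asboolP.
Qed.

Lemma exists_optimal_grundy : exists C, optimal G f C /\ grundy G C.
Proof.
have [C0 [feasC0 optC0]] := exists_optimal.
have [C [feasC grC le_C]] := grundy_below feasC0.
exists C; split=> //; split=> // C' feasC'.
exact: le_trans (f_reg (proj1 feasC) (proj1 feasC0) le_C) (optC0 C' feasC').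
Qed.

End OptimalSchedules.

Section Log2.
Local Open Scope ring_scope.

Lemma natr_le_log2 (R : realType) (n k c : nat) : (0 < n)%N -> (2 ^ c.-1 <= n ^ k)%N ->
  (c%:R : R) <= k%:R * log2 n%:R + 1.
Proof.
move=> n_gt0 pow_le.
have two_gt0 : (0 : R) < 2 by rewrite ltr0n.
have n_pos : (0 : R) < n%:R by rewrite ltr0n.
have ln_le : c.-1%:R * ln 2 <= k%:R * ln n%:R :> R.
  rewrite !mulr_natl -(lnXn c.-1 two_gt0) -(lnXn k n_pos).
  by rewrite ler_ln ?posrE ?exprn_gt0 // -!natrX ler_nat.
have c_le : (c%:R : R) <= c.-1%:R + 1 by rewrite natr1 ler_nat leqSpred.
apply: le_trans c_le _.
by rewrite lerD2r /log2 mulrA (ler_pdivlMr _ _ (ln_gt0 _)) ?ltr1n.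
Qed.

End Log2.

Theorem corollary2 (R : realType) (n : nat) (G : rel 'I_n)
  (f : schedule n -> R) (tw : nat) :
  simple_graph G -> regular f -> is_treewidth G tw ->
  exists C : schedule n,
    optimal G f C /\
    ((Cmax C)%:R <= tw%:R * log2 (n%:R : R) + 1)%R.
Proof.
move=> [Gsym Girr] reg [[T [eT [B [TD <-]]]] _].
have Gdeg := tree_decomposition_degenerate Girr TD.
have [C [optC grC]] := exists_optimal_grundy Gsym Girr reg.
exists C; split=> //.
have [n0 | n_gt0] := posnP n.
  have -> : Cmax C = 0.
    by apply/eqP; rewrite -leqn0; apply/bigmax_leqP => j _; have := ltn_ord j; lia.
  by rewrite [in log2 _]n0 /log2 ln0 // mul0r mulr0 add0r ler01.
have [j ->] : exists j, Cmax C = C j.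
  by have [j Cj] := @bigop.eq_bigmax 'I_n C ltac:(by rewrite card_ord); exists j.
apply: natr_le_log2 n_gt0 _.
by have := grundy_color_bound Gsym Girr Gdeg grC j; rewrite card_ord.
Qed.
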